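(* Let $L>0$, $0<\sigma\le1$, $r>0$, and let $f(\mathbf I,\boldsymbol\phi)=\sum_{\boldsymbol\mu\in\mathcal N}f_{\boldsymbol\mu}(\mathbf I)e^{\mathrm i\boldsymbol\mu\cdot\boldsymbol\phi}$ be analytic on $\mathcal D_{L,r,\sigma}$, where $\mathcal N\subset\mathbb Z^n$ is finite. If $r<1/(2n|\mathcal N|)$, then $Qf$ is analytic on $\mathcal D_{L,r,\sigma'}$ for every $0<\sigma'<\sigma$, and $$\|Qf\|_{L,r,\sigma'}\le 2\Big(\frac{4}{\sigma-\sigma'}\Big)^n\frac{\|f\|_{L,r,\sigma}}{L}.$$
   Context: Fix $n\ge2$ and $1\le k\le n$ (here $2\le k\le n$ in the paper). $\mathcal D_{L,r,\sigma}=\{(\mathbf I,\boldsymbol\phi)\in\mathbb C^{2n}:|I_i-L\delta_{i,k}|<rL,\ |\mathrm{Im}\,\phi_i|<\sigma,\ i=1,\dots,n\}$; for functions $2\pi$-periodic in each $\phi_i$, $\|f\|_{L,r,\sigma}=\sup_{\mathcal D_{L,r,\sigma}}|f|$. For $\boldsymbol\mu\in\mathbb Z^n$, $|\boldsymbol\mu|=\max_i|\mu_i|$ and $|\mathcal N|=\sup_{\boldsymbol\mu\in\mathcal N}|\boldsymbol\mu|$. $Qf=-\mathrm i\sum_{\boldsymbol\mu\in\mathcal N,\ \mu_k\neq0}\frac{f_{\boldsymbol\mu}(\mathbf I)}{\mathbf I\cdot\boldsymbol\mu}e^{\mathrm i\boldsymbol\mu\cdot\boldsymbol\phi}$. *)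

From HB Require Import structures.
From mathcomp Require Import all_boot all_order all_algebra.
From mathcomp Require Import complex.
From mathcomp Require Import all_classical all_reals.
From mathcomp Require Import ereal sequences.
From mathcomp.analysis Require Import exp trigo.
Set Implicit Arguments. Unset Strict Implicit. Unset Printing Implicit Defensive.
Import Order.TTheory GRing.Theory Num.Theory.
Local Open Scope ring_scope.

Section Defs.
Variable R : realType.
Local Notation C := R[i].

Definition cabs (z : C) : R := ComplexField.Normc.normc z.

Definition cexp (z : C) : C :=
  ((expR (complex.Re z) * cos (complex.Im z)) +i* (expR (complex.Re z) * sin (complex.Im z)))%C.

Definition vnorm (n : nat) (v : 'I_n -> C) : R := \big[Num.max/0]_(i < n) cabs (v i).

Definition idot (n : nat) (mu : {ffun 'I_n -> int}) (phi : 'I_n -> C) : C :=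
  \sum_(i < n) (mu i)%:~R * phi i.

Definition inorm (n : nat) (mu : {ffun 'I_n -> int}) : nat := \max_(i < n) `|mu i|%N.

Definition setnorm (n : nat) (N : seq {ffun 'I_n -> int}) : nat :=
  \max_(mu <- N) inorm mu.

Definition domD (n : nat) (k : 'I_n) (L r sigma : R) (I phi : 'I_n -> C) : Prop :=
  forall i : 'I_n,
    cabs (I i - (if i == k then L%:C else 0)%C) < r * L /\
    `|complex.Im (phi i)| < sigma.

(* holomorphic (complex Frechet-differentiable) at every point of U;
   "analytic" in the paper *)
Definition analytic_on (n : nat) (F : ('I_n -> C) -> ('I_n -> C) -> C)
    (U : ('I_n -> C) -> ('I_n -> C) -> Prop) : Prop :=
  forall I phi, U I phi ->
    exists a b : 'I_n -> C,
      forall eps : R, 0 < eps -> exists2 delta : R, 0 < delta &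
        forall h g : 'I_n -> C, vnorm h < delta -> vnorm g < delta ->
          cabs (F (fun i => I i + h i) (fun i => phi i + g i) - F I phi
                 - \sum_(i < n) a i * h i - \sum_(i < n) b i * g i)
            <= eps * Num.max (vnorm h) (vnorm g).

Definition supnorm (n : nat) (k : 'I_n) (L r sigma : R)
    (F : ('I_n -> C) -> ('I_n -> C) -> C) : \bar R :=
  ereal_sup [set x : \bar R | exists I phi, domD k L r sigma I phi /\ x = ((cabs (F I phi))%:E)%E].

(* the operator Q applied to f = sum_{mu in N} fmu mu (I) e^{i mu.phi} *)
Definition Qop (n : nat) (k : 'I_n) (N : seq {ffun 'I_n -> int})
    (fmu : {ffun 'I_n -> int} -> ('I_n -> C) -> C) (I phi : 'I_n -> C) : C :=
  - 'i%C * \sum_(mu <- N | mu k != 0) (fmu mu I / idot mu I * cexp ('i%C * idot mu phi)).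

End Defs.

(* The coefficients of [Q f] are [f_mu(I) / (I . mu)], and on the domain
   [|I . mu| > L/2] whenever [mu_k != 0], because [r < 1/(2 n |N|)].
   As the frequencies are finitely many, [f_mu(I)] is recovered exactly as the
   average of [f(I, .) e^{-i mu . phi}] over the grid
   [phi_i = 2 pi j_i / M + i tau_i], [M = 2|N| + 1], for any fixed imaginary
   part [tau] inside the strip.  With [tau = 0] this writes [Q f] near each
   point as a finite combination of holomorphic functions, [1/z] and [exp],
   so [Q f] is holomorphic.  With [tau_i = -s] for [mu_i >= 0] and [tau_i = s]
   otherwise, it gives the Cauchy estimate [|f_mu(I)| <= ||f|| e^{-s |mu|_1}];
   for [s = sigma' + y] the sum over [mu] is then at most
   [(2/L) ||f|| (2 / (1 - e^{-y}))^n], and [y = d / (2 - d)] with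
   [d = sigma - sigma'] makes [2 / (1 - e^{-y}) <= 4/d]. *)

From HB Require Import structures.
From mathcomp Require Import all_boot all_order all_algebra.
From mathcomp Require Import complex.
From mathcomp Require Import all_classical all_reals.
From mathcomp Require Import ereal sequences.
From mathcomp.analysis Require Import exp trigo.
From mathcomp Require Import topology normedtype derive.
From mathcomp Require Import ring lra.
Import Order.TTheory GRing.Theory Num.Theory numFieldNormedType.Exports.
Local Open Scope ring_scope.

Section RealEstimates.
Context {R : realType}.

Lemma norm_sin_le (x : R) : `|sin x| <= `|x|.
Proof.
wlog x0 : x / 0 <= x.
  move=> H; case: (lerP 0 x) => [/H//|x0].
  by rewrite -normrN -sinN -(normrN x) H // oppr_ge0 ltW.
have [|c _] := MVT_segment x0 (fun y _ => is_derive_sin y).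
  exact/continuous_subspaceT/continuous_sin.
by rewrite sin0 !subr0 => ->; rewrite normrM ler_piMl // cos_max.
Qed.

Lemma norm_cos_sub1_le (x : R) : `|cos x - 1| <= x ^+ 2 / 2.
Proof.
have -> : cos x = 1 - 2 * sin (x / 2) ^+ 2.
  rewrite -{1}(divfK (_ : 2 != 0) x) ?pnatr_eq0 // mulr_natr.
  by rewrite cos_mulr2n cos2sin2; lra.
have : sin (x / 2) ^+ 2 <= (x / 2) ^+ 2.
  rewrite -(real_normK (num_real (sin _))) -(real_normK (num_real (x / 2))).
  by rewrite lerXn2r ?nnegrE // norm_sin_le.
have := sqr_ge0 (sin (x / 2)); rewrite ler_norml; lra.
Qed.

Lemma norm_sin_subid_le (x : R) : `|x| <= 1 -> `|sin x - x| <= x ^+ 2.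
Proof.
wlog x0 : x / 0 <= x.
  move=> H; case: (lerP 0 x) => [/H//|x0] x1.
  have := H (- x); rewrite sinN sqrrN -opprD !normrN; apply => //.
  by rewrite oppr_ge0 ltW.
move=> x1; have {}x1 : x <= 1 by rewrite -(ger0_norm x0).
have [|c] := MVT_segment x0 (fun y _ =>
  is_deriveB (is_derive_sin y) (is_derive_id y 1)).
  apply/continuous_subspaceT => t.
  by apply: continuousB; [exact: continuous_sin | exact: cvg_id].
rewrite in_itv /= => /andP[c0 cx]; rewrite !fctE sin0 !subr0 => ->.
have := norm_cos_sub1_le c; rewrite normrM (ger0_norm x0) => hc.
apply: (le_trans (ler_wpM2r x0 hc)).
have : c ^+ 2 <= x ^+ 2 by rewrite lerXn2r ?nnegrE.
nra.
Qed.

Lemma norm_expR_sub1Dx_le (a : R) : `|a| <= 1 / 2 ->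
  `|expR a - 1 - a| <= 2 * a ^+ 2.
Proof.
rewrite ler_norml => /andP[a1 a2].
have E1 := expR_ge1Dx a; have E2 := expR_ge1Dx (- a).
have E3 := expRxMexpNx_1 a; have E0 := expR_gt0 a.
set E := expR a in E1 E3 E0 *; set F := expR (- a) in E2 E3 *.
have E2b : E <= 2 by nra.
have : E - 1 - a <= E * a ^+ 2 by nra.
rewrite ler_norml; nra.
Qed.

End RealEstimates.

Section ComplexModulus.
Context {R : realType}.
Local Notation C := R[i].
Local Open Scope complex_scope.
Local Notation cabs := (@cabs R).

Lemma cabs_ge0 (z : C) : 0 <= cabs z.
Proof. by case: z => a b; rewrite /cabs /= sqrtr_ge0. Qed.

Lemma ler_cabsD (x y : C) : cabs (x + y) <= cabs x + cabs y.
Proof. exact: le_normcD. Qed.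

Lemma cabsM (x y : C) : cabs (x * y) = cabs x * cabs y.
Proof. exact: ComplexField.Normc.normcM. Qed.

Lemma cabsN (x : C) : cabs (- x) = cabs x.
Proof. exact: normcN. Qed.

Lemma ler_cabsB (x y : C) : cabs (x - y) <= cabs x + cabs y.
Proof. by rewrite -(cabsN y) ler_cabsD. Qed.

Lemma cabsV (x : C) : cabs x^-1 = (cabs x)^-1.
Proof. exact: ComplexField.Normc.normcV. Qed.

Lemma cabs0 : cabs 0 = 0.
Proof. exact: ComplexField.Normc.normc0. Qed.

Lemma cabs_gt0 (x : C) : (0 < cabs x) = (x != 0).
Proof.
rewrite lt_def cabs_ge0 andbT; apply/idP/idP; apply: contraNN => /eqP.
  by move=> ->; rewrite cabs0.
by move/ComplexField.Normc.eq0_normc ->.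
Qed.

Lemma cabsC (x : R) : cabs x%:C = `|x|.
Proof. by rewrite /cabs /= expr0n /= addr0 sqrtr_sqr. Qed.

Lemma cabs_i : cabs 'i = 1.
Proof. by rewrite /cabs /= expr0n /= expr1n add0r sqrtr1. Qed.

Lemma ler_cabs_Re (z : C) : `|complex.Re z| <= cabs z.
Proof.
case: z => a b; rewrite /cabs /= -sqrtr_sqr ler_wsqrtr //.
by rewrite lerDl sqr_ge0.
Qed.

Lemma ler_cabs_Im (z : C) : `|complex.Im z| <= cabs z.
Proof.
case: z => a b; rewrite /cabs /= -sqrtr_sqr ler_wsqrtr //.
by rewrite lerDr sqr_ge0.
Qed.

Lemma cabs_le_ReIm (a b : R) : cabs (a +i* b) <= `|a| + `|b|.
Proof.
rewrite [a +i* b]complexE; apply: le_trans (ler_cabsD _ _) _.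
by rewrite cabsM cabs_i mul1r !cabsC.
Qed.

Lemma ler_cabs_sum (I : Type) (r : seq I) (P : pred I) (F : I -> C) :
  cabs (\sum_(i <- r | P i) F i) <= \sum_(i <- r | P i) cabs (F i).
Proof.
elim/big_rec2: _ => [|i y z _ yz]; first by rewrite cabs0.
by rewrite (le_trans (ler_cabsD _ _)) // lerD2l.
Qed.

Lemma intr_complex (d : int) : (d%:~R : C) = (d%:~R : R)%:C.
Proof. by rewrite -(rmorph_int (real_complex R)). Qed.

Lemma cabs_intr (d : int) : cabs d%:~R = `|(d%:~R : R)|.
Proof. by rewrite intr_complex cabsC. Qed.

Lemma Im_sum (I : Type) (s : seq I) (P : pred I) (F : I -> C) :
  complex.Im (\sum_(i <- s | P i) F i) = \sum_(i <- s | P i) complex.Im (F i).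
Proof. by apply: (big_morph (@complex.Im R)) => // -[a b] [c d]. Qed.

End ComplexModulus.

Section ComplexExp.
Context {R : realType}.
Local Notation C := R[i].
Local Open Scope complex_scope.
Local Notation cabs := (@cabs R).
Local Notation cexp := (@cexp R).

Lemma cexpD (x y : C) : cexp (x + y) = cexp x * cexp y.
Proof.
case: x => a b; case: y => c d; rewrite /cexp /=.
by apply/eqP; rewrite eq_complex /= expRD cosD sinD; apply/andP; split; apply/eqP; ring.
Qed.

Lemma cexp0 : cexp 0 = 1.
Proof. by rewrite /cexp /= expR0 cos0 sin0 mul1r mulr0. Qed.

Lemma cexp_sum (I : Type) (r : seq I) (P : pred I) (F : I -> C) :
  cexp (\sum_(i <- r | P i) F i) = \prod_(i <- r | P i) cexp (F i).
Proof. exact: (big_morph cexp cexpD cexp0). Qed.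

Lemma cexpN (z : C) : cexp (- z) = (cexp z)^-1.
Proof.
have ez : cexp z * cexp (- z) = 1 by rewrite -cexpD subrr cexp0.
have z0 : cexp z != 0 by apply: contra_eq_neq ez => ->; rewrite mul0r eq_sym oner_neq0.
by apply: (mulfI z0); rewrite ez mulfV.
Qed.

Lemma cabs_cexp (z : C) : cabs (cexp z) = expR (complex.Re z).
Proof.
rewrite /cexp /cabs /= !exprMn -mulrDr cos2Dsin2 mulr1 sqrtr_sqr.
by rewrite ger0_norm // expR_ge0.
Qed.

Lemma cabs_cexp_i (z : C) : cabs (cexp ('i * z)) = expR (- complex.Im z).
Proof. by rewrite cabs_cexp; case: z => a b /=; rewrite !mul0r mul1r sub0r. Qed.

Lemma cabs_cexp_Ni (z : C) : cabs (cexp (- ('i * z))) = expR (complex.Im z).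
Proof. by rewrite cabs_cexp; case: z => a b /=; rewrite !mul0r mul1r sub0r opprK. Qed.

Lemma cexp_sub1D_le (w : C) : cabs w <= 1 / 2 ->
  cabs (cexp w - 1 - w) <= 8 * cabs w ^+ 2.
Proof.
case: w => a b; set c := cabs _ => hc.
have ha : `|a| <= c := ler_cabs_Re (a +i* b).
have hb : `|b| <= c := ler_cabs_Im (a +i* b).
have hr := norm_expR_sub1Dx_le a (le_trans ha hc).
set r := expR a - 1 - a in hr.
have hcos := norm_cos_sub1_le b.
have hb1 : `|b| <= 1 by lra.
have hsin := norm_sin_subid_le b hb1.
have [hsa hca] := (norm_sin_le b, cos_max b).
rewrite -!(real_normK (num_real a)) -!(real_normK (num_real b)) in hr hcos hsin.
have -> : cexp (a +i* b) - 1 - (a +i* b) =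
    ((cos b - 1) * (1 + a) + r * cos b) +i* ((sin b - b) + a * sin b + r * sin b).
  by apply/eqP; rewrite eq_complex /= /r; apply/andP; split; apply/eqP; ring.
apply: (le_trans (cabs_le_ReIm _ _)).
have hX : `|(cos b - 1) * (1 + a) + r * cos b| <= `|cos b - 1| * (1 + `|a|) + `|r|.
  apply: le_trans (ler_normD _ _) _; rewrite !normrM lerD //.
    by rewrite ler_wpM2l // (le_trans (ler_normD _ _)) // normr1.
  by rewrite ler_piMr.
have hY : `|(sin b - b) + a * sin b + r * sin b| <= `|sin b - b| + `|a| * `|b| + `|r|.
  apply: le_trans (ler_normD _ _) _; rewrite !normrM lerD //.
    by apply: le_trans (ler_normD _ _) _; rewrite normrM lerD // ler_wpM2l.
  by rewrite ler_piMr // (le_trans hsa) // (le_trans hb) // (le_trans hc).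
have [a0 b0] := (normr_ge0 a, normr_ge0 b).
have [cos0 r0] := (normr_ge0 (cos b - 1), normr_ge0 r).
nra.
Qed.

End ComplexExp.


Lemma mulr_div_succ_le {R : realFieldType} (a e : R) : 0 <= a -> 0 <= e ->
  a * (e / (a + 1)) <= e.
Proof.
move=> a0 e0; rewrite mulrCA ler_piMr // ler_pdivrMr ?mul1r ?lerDl //.
by rewrite ltr_wpDl.
Qed.

Section ComplexDerivative.
Context {R : realType}.
Local Notation C := R[i].
Local Notation cabs := (@cabs R).

Definition has_cderiv (u : C -> C) (z0 d : C) := forall eps : R, 0 < eps ->
  exists2 delta : R, 0 < delta & forall w, cabs w < delta ->
    cabs (u (z0 + w) - u z0 - d * w) <= eps * cabs w.

Lemma has_cderiv_inv {z0 : C} : z0 != 0 -> has_cderiv GRing.inv z0 (- (z0 ^+ 2)^-1).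
Proof.
move=> z00 eps e0; set c := cabs z0.
have c0 : 0 < c by rewrite cabs_gt0.
have dd : 0 < eps * c ^+ 3 / 2 by rewrite divr_gt0 // mulr_gt0 // exprn_gt0.
exists (Num.min (c / 2) (eps * c ^+ 3 / 2)) => [|w]; first by rewrite lt_min dd divr_gt0.
rewrite lt_min => /andP[w1 w2].
have x0 := cabs_ge0 w.
have hy : c / 2 <= cabs (z0 + w).
  by have := ler_cabsB (z0 + w) w; rewrite addrK -/c; lra.
have zw : z0 + w != 0 by rewrite -cabs_gt0; apply: lt_le_trans hy; rewrite divr_gt0.
have -> : (z0 + w)^-1 - z0^-1 - - (z0 ^+ 2)^-1 * w = w ^+ 2 / (z0 ^+ 2 * (z0 + w)).
  by field; rewrite zw z00.
rewrite cabsM cabsV cabsM !expr2 !cabsM -/c.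
set x := cabs w in x0 w1 w2 *; set y := cabs (z0 + w) in hy *.
have y0 : 0 < y by apply: lt_le_trans hy; rewrite divr_gt0.
rewrite ler_pdivrMr; last by rewrite !mulr_gt0.
have h1 : x * x <= x * (eps * c ^+ 3 / 2) by rewrite ler_wpM2l // ltW.
have h2 : eps * x * (c ^+ 3 / 2) <= eps * x * (c * c * y).
  rewrite ler_wpM2l ?mulr_ge0 ?(ltW e0) // exprSr expr2 -mulrA ler_wpM2l //.
  by rewrite mulr_ge0 // ltW.
by apply: (le_trans h1); apply: le_trans h2; rewrite !mulrA; lra.
Qed.

Lemma has_cderiv_cexp (z0 : C) : has_cderiv (@cexp R) z0 (cexp z0).
Proof.
move=> eps e0; set E := cabs (cexp z0); have E0 : 0 <= E by apply: cabs_ge0.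
set t := eps / (8 * (E + 1)).
have t0 : 0 < t by rewrite divr_gt0 // mulr_gt0 // ltr_wpDl.
have te : t * (8 * (E + 1)) = eps by rewrite mulfVK // gt_eqF // mulr_gt0 // ltr_wpDl.
exists (Num.min (1 / 2) t) => [|w]; first by rewrite lt_min t0; lra.
rewrite lt_min => /andP[w1 w2].
have -> : cexp (z0 + w) - cexp z0 - cexp z0 * w = cexp z0 * (cexp w - 1 - w).
  by rewrite cexpD; ring.
rewrite cabsM -/E.
have := ler_wpM2l E0 (cexp_sub1D_le w (ltW w1)).
have x0 := cabs_ge0 w; set x := cabs w in w1 w2 x0 *.
have : x * x <= t * x by rewrite ler_wpM2r // ltW.
have : 0 <= E * x by apply: mulr_ge0.
rewrite -te; nra.
Qed.

End ComplexDerivative.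

Section Holomorphy.
Context {R : realType} {n : nat}.
Local Notation C := R[i].
Local Notation V := ('I_n -> C).
Local Notation cabs := (@cabs R).
Local Notation vmax h g := (Num.max (vnorm h) (vnorm g)).

Lemma vnorm_ge0 (v : V) : 0 <= vnorm v.
Proof.
apply: (big_ind (fun x => 0 <= x)) => // [x y x0 _|i _]; last exact: cabs_ge0.
by rewrite le_max x0.
Qed.

Lemma ler_cabs_vnorm (v : V) i : cabs (v i) <= vnorm v.
Proof. by rewrite /vnorm (bigD1 i) //= le_max lexx. Qed.

Lemma vnorm_lt (v : V) d : 0 < d -> (forall i, cabs (v i) < d) -> vnorm v < d.
Proof.
move=> d0 vd; apply: (big_ind (fun x => x < d)) => // x y xd yd.
by rewrite gt_max xd.
Qed.

Lemma vnorm0 : vnorm (fun _ : 'I_n => 0 : C) = 0.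
Proof. by rewrite /vnorm; elim/big_rec: _ => // i x _ ->; rewrite cabs0 maxxx. Qed.

Lemma vmax_ge0 (h g : V) : 0 <= vmax h g.
Proof. by rewrite le_max vnorm_ge0. Qed.

Lemma ler_cabs_dot (a h : V) :
  cabs (\sum_i a i * h i) <= (\sum_i cabs (a i)) * vnorm h.
Proof.
apply: (le_trans (ler_cabs_sum _ _ _ _)); rewrite mulr_suml ler_sum // => i _.
by rewrite cabsM ler_wpM2l ?cabs_ge0 ?ler_cabs_vnorm.
Qed.

Lemma sum_mulDl (a1 a2 h : V) :
  \sum_i (a1 i + a2 i) * h i = \sum_i a1 i * h i + \sum_i a2 i * h i.
Proof. by rewrite -big_split; apply: eq_bigr => i _; rewrite mulrDl. Qed.

Lemma sum_mulDr (a h1 h2 : V) :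
  \sum_i a i * (h1 i + h2 i) = \sum_i a i * h1 i + \sum_i a i * h2 i.
Proof. by rewrite -big_split; apply: eq_bigr => i _; rewrite mulrDr. Qed.

Lemma sum_mulAl (c : C) (a h : V) : \sum_i (c * a i) * h i = c * \sum_i a i * h i.
Proof. by rewrite mulr_sumr; apply: eq_bigr => i _; rewrite mulrA. Qed.

Definition littleo0 (E : V -> V -> C) := forall eps : R, 0 < eps ->
  exists2 delta : R, 0 < delta & forall h g : V, vnorm h < delta -> vnorm g < delta ->
    cabs (E h g) <= eps * vmax h g.

Definition bigO0 (E : V -> V -> C) := exists2 K : R, 0 <= K &
  exists2 delta : R, 0 < delta & forall h g : V, vnorm h < delta -> vnorm g < delta ->
    cabs (E h g) <= K * vmax h g.

Definition holomorphic_at (F : V -> V -> C) (I phi : V) := exists a b : V,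
  littleo0 (fun h g => F (fun i => I i + h i) (fun i => phi i + g i) - F I phi
                       - \sum_i a i * h i - \sum_i b i * g i).

Lemma eq_bigO0 {E E' : V -> V -> C} :
  bigO0 E -> (forall h g, E h g = E' h g) -> bigO0 E'.
Proof. by move=> + EE'; rewrite (_ : E' = E) //; apply/funext => h; apply/funext. Qed.

Lemma eq_littleo0 {E E' : V -> V -> C} :
  littleo0 E -> (forall h g, E h g = E' h g) -> littleo0 E'.
Proof. by move=> + EE'; rewrite (_ : E' = E) //; apply/funext => h; apply/funext. Qed.

Lemma littleo0D {E1 E2 : V -> V -> C} : littleo0 E1 -> littleo0 E2 ->
  littleo0 (fun h g => E1 h g + E2 h g).
Proof.
move=> o1 o2 eps e0; have e2 : 0 < eps / 2 by rewrite divr_gt0.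
have [[d1 d10 E1d] [d2 d20 E2d]] := (o1 _ e2, o2 _ e2).
exists (Num.min d1 d2) => [|h g]; first by rewrite lt_min d10.
rewrite !lt_min => /andP[h1 h2] /andP[g1 g2].
rewrite [eps]splitr mulrDl (le_trans (ler_cabsD _ _)) //.
by rewrite lerD ?E1d ?E2d.
Qed.

Lemma littleo0Z (c : C) {E : V -> V -> C} : littleo0 E ->
  littleo0 (fun h g => c * E h g).
Proof.
move=> oE eps e0; have c0 := cabs_ge0 c.
have [d d0 Ed] := oE (eps / (cabs c + 1)) (divr_gt0 e0 (ltr_wpDl c0 ltr01)).
exists d => // h g hd gd; rewrite cabsM.
apply: le_trans (ler_wpM2l c0 (Ed _ _ hd gd)) _.
by rewrite mulrA ler_wpM2r ?vmax_ge0 // mulr_div_succ_le // ltW.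
Qed.

Lemma littleo0M {E1 E2 : V -> V -> C} : bigO0 E1 -> bigO0 E2 ->
  littleo0 (fun h g => E1 h g * E2 h g).
Proof.
move=> [K1 K10 [d1 d10 E1d]] [K2 K20 [d2 d20 E2d]] eps e0.
have K0 := mulr_ge0 K10 K20.
have d0 : 0 < eps / (K1 * K2 + 1) by rewrite divr_gt0 // ltr_wpDl.
exists (Num.min d1 (Num.min d2 (eps / (K1 * K2 + 1)))) => [|h g].
  by rewrite !lt_min d10 d20.
rewrite !lt_min => /and3P[h1 h2 h3] /and3P[g1 g2 g3].
have m0 := vmax_ge0 h g.
have hm : vmax h g <= eps / (K1 * K2 + 1) by rewrite ltW // gt_max h3.
rewrite cabsM (le_trans (ler_pM (cabs_ge0 _) (cabs_ge0 _) (E1d _ _ h1 g1) (E2d _ _ h2 g2))) //.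
have -> : K1 * vmax h g * (K2 * vmax h g) = K1 * K2 * vmax h g * vmax h g by ring.
apply: ler_wpM2r => //; apply: le_trans (ler_wpM2l K0 hm) _.
by rewrite mulr_div_succ_le // ltW.
Qed.

Lemma bigO0_littleo0 {E : V -> V -> C} : littleo0 E -> bigO0 E.
Proof. by move=> /(_ 1 ltr01) Ed; exists 1. Qed.

Lemma bigO0D {E1 E2 : V -> V -> C} : bigO0 E1 -> bigO0 E2 ->
  bigO0 (fun h g => E1 h g + E2 h g).
Proof.
move=> [K1 K10 [d1 d10 E1d]] [K2 K20 [d2 d20 E2d]].
exists (K1 + K2); first exact: addr_ge0.
exists (Num.min d1 d2) => [|h g]; first by rewrite lt_min d10.
rewrite !lt_min => /andP[h1 h2] /andP[g1 g2].
by rewrite mulrDl (le_trans (ler_cabsD _ _)) // lerD ?E1d ?E2d.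
Qed.

Lemma bigO0_dot (a b : V) : bigO0 (fun h g => \sum_i a i * h i + \sum_i b i * g i).
Proof.
have sa0 (c : V) : 0 <= \sum_i cabs (c i) by apply: sumr_ge0 => i _; apply: cabs_ge0.
exists (\sum_i cabs (a i) + \sum_i cabs (b i)); first exact: addr_ge0.
exists 1 => // h g _ _; rewrite mulrDl (le_trans (ler_cabsD _ _)) //.
by rewrite lerD // (le_trans (ler_cabs_dot _ _)) // ler_wpM2l // le_max lexx ?orbT.
Qed.

Lemma holomorphic_at_bigO0 {F : V -> V -> C} {I phi : V} : holomorphic_at F I phi ->
  bigO0 (fun h g => F (fun i => I i + h i) (fun i => phi i + g i) - F I phi).
Proof.
move=> [a [b /bigO0_littleo0 /bigO0D /(_ (bigO0_dot a b)) O]].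
by apply: (eq_bigO0 O) => h g; ring.
Qed.

Lemma littleo0_comp {u : C -> C} {z0 d : C} {W : V -> V -> C} :
  has_cderiv u z0 d -> bigO0 W ->
  littleo0 (fun h g => u (z0 + W h g) - u z0 - d * W h g).
Proof.
move=> du [K K0 [dW dW0 Wd]] eps e0.
have K1 : 0 < K + 1 by rewrite ltr_wpDl.
have [du0 du00 ud] := du _ (divr_gt0 e0 K1).
have dK : 0 < du0 / (K + 1) by rewrite divr_gt0.
exists (Num.min dW (du0 / (K + 1))) => [|h g]; first by rewrite lt_min dW0.
rewrite !lt_min => /andP[h1 h2] /andP[g1 g2].
have m0 := vmax_ge0 h g.
have hm : vmax h g < du0 / (K + 1) by rewrite gt_max h2.
have hW := Wd _ _ h1 g1.
have Wdu : cabs (W h g) < du0.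
  apply: le_lt_trans hW _; apply: le_lt_trans (_ : _ <= (K + 1) * vmax h g) _.
    by rewrite ler_wpM2r // lerDl.
  by rewrite mulrC -ltr_pdivlMr.
apply: le_trans (ud _ Wdu) _; apply: le_trans (ler_wpM2l _ hW) _.
  exact/ltW/divr_gt0.
by rewrite mulrA ler_wpM2r // mulrC mulr_div_succ_le // ltW.
Qed.

Lemma eq_holomorphic_at {F G : V -> V -> C} {I phi : V} :
  holomorphic_at F I phi -> (forall I phi, F I phi = G I phi) -> holomorphic_at G I phi.
Proof. by move=> + FG; rewrite (_ : G = F) //; apply/funext => J; apply/funext. Qed.

Lemma holomorphic_at_cst (c : C) (I phi : V) : holomorphic_at (fun _ _ => c) I phi.
Proof.
exists (fun _ => 0), (fun _ => 0) => eps e0; exists 1 => // h g _ _.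
have dot0 (x : V) : \sum_i 0 * x i = 0 by rewrite big1 // => i _; rewrite mul0r.
by rewrite !dot0 !subrr ?subr0 cabs0 mulr_ge0 ?vmax_ge0 // ltW.
Qed.

Lemma holomorphic_at_dot (a b I phi : V) :
  holomorphic_at (fun I phi => \sum_i a i * I i + \sum_i b i * phi i) I phi.
Proof.
exists a, b => eps e0; exists 1 => // h g _ _.
rewrite (_ : _ - _ = 0); first by rewrite cabs0 mulr_ge0 ?vmax_ge0 // ltW.
by rewrite !sum_mulDr; ring.
Qed.

Lemma holomorphic_atD {F G : V -> V -> C} {I phi : V} :
  holomorphic_at F I phi -> holomorphic_at G I phi ->
  holomorphic_at (fun I phi => F I phi + G I phi) I phi.
Proof.
move=> [a1 [b1 oF]] [a2 [b2 oG]].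
exists (fun i => a1 i + a2 i), (fun i => b1 i + b2 i).
by apply: (eq_littleo0 (littleo0D oF oG)) => h g; rewrite !sum_mulDl; ring.
Qed.

Lemma holomorphic_atM {F G : V -> V -> C} {I phi : V} :
  holomorphic_at F I phi -> holomorphic_at G I phi ->
  holomorphic_at (fun I phi => F I phi * G I phi) I phi.
Proof.
move=> hF hG; have OF := holomorphic_at_bigO0 hF; have OG := holomorphic_at_bigO0 hG.
case: hF hG => a1 [b1 oF] [a2 [b2 oG]].
exists (fun i => G I phi * a1 i + F I phi * a2 i).
exists (fun i => G I phi * b1 i + F I phi * b2 i).
apply: (eq_littleo0 (littleo0D (littleo0D (littleo0Z (G I phi) oF)
  (littleo0Z (F I phi) oG)) (littleo0M OF OG))) => h g.
by rewrite !sum_mulDl !sum_mulAl; ring.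
Qed.

Lemma holomorphic_at_comp (F : V -> V -> C) {u : C -> C} {d : C} {I phi : V} :
  has_cderiv u (F I phi) d -> holomorphic_at F I phi ->
  holomorphic_at (fun I phi => u (F I phi)) I phi.
Proof.
move=> du hF; have /(littleo0_comp du) ou := holomorphic_at_bigO0 hF.
case: hF => a [b oF]; exists (fun i => d * a i), (fun i => d * b i).
apply: (eq_littleo0 (littleo0D ou (littleo0Z d oF))) => h g /=.
by rewrite [F I phi + _]addrC subrK !sum_mulAl; ring.
Qed.

Lemma holomorphic_at_sum (T : Type) (r : seq T) (P : pred T)
    (Fs : T -> V -> V -> C) (I phi : V) :
  (forall x, P x -> holomorphic_at (Fs x) I phi) ->
  holomorphic_at (fun I phi => \sum_(x <- r | P x) Fs x I phi) I phi.
Proof.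
move=> hFs; elim: r => [|x r IH].
  by apply: (eq_holomorphic_at (holomorphic_at_cst 0 I phi)) => *; rewrite big_nil.
case Px: (P x); last first.
  by apply: (eq_holomorphic_at IH) => *; rewrite big_cons Px.
apply: (eq_holomorphic_at (holomorphic_atD (hFs x Px) IH)) => *.
by rewrite big_cons Px.
Qed.

Lemma holomorphic_at_fix2 (F : V -> V -> C) (I theta phi : V) :
  holomorphic_at F I theta -> holomorphic_at (fun J (_ : V) => F J theta) I phi.
Proof.
case=> a [b oF]; exists a, (fun _ => 0) => eps e0.
have [d d0 Fd] := oF eps e0; exists d => // h g hd gd.
have z0 : vnorm (fun _ : 'I_n => 0 : C) < d by rewrite vnorm0.
have := Fd h _ hd z0.
rewrite vnorm0 (_ : (fun i => theta i + 0) = theta); last by apply/funext => i; rewrite addr0.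
have db : \sum_i b i * (fun _ : 'I_n => 0 : C) i = 0.
  by rewrite big1 // => i _; rewrite mulr0.
have dg : \sum_i (fun _ : 'I_n => 0 : C) i * g i = 0.
  by rewrite big1 // => i _; rewrite mul0r.
rewrite db dg !subr0 => /le_trans; apply; rewrite ler_wpM2l ?(ltW e0) //.
by rewrite ge_max !le_max lexx vnorm_ge0.
Qed.

Lemma holomorphic_at_local {F G : V -> V -> C} {I phi : V} {rho : R} : 0 < rho ->
  (forall h g : V, vnorm h < rho -> vnorm g < rho ->
     F (fun i => I i + h i) (fun i => phi i + g i) =
     G (fun i => I i + h i) (fun i => phi i + g i)) ->
  F I phi = G I phi -> holomorphic_at G I phi -> holomorphic_at F I phi.
Proof.
move=> rho0 FG FG0 [a [b oG]]; exists a, b => eps e0.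
have [d d0 Gd] := oG eps e0; exists (Num.min d rho) => [|h g]; first by rewrite lt_min d0.
by rewrite !lt_min => /andP[h1 h2] /andP[g1 g2]; rewrite FG // FG0; apply: Gd.
Qed.

End Holomorphy.

Section UnitCircle.
Context {R : realType}.
Local Notation C := R[i].
Local Open Scope complex_scope.
Local Notation cexp := (@cexp R).

Definition expi (x : R) : C := cexp (0 +i* x).

Lemma expiD (x y : R) : expi (x + y) = expi x * expi y.
Proof. by rewrite /expi -cexpD; congr cexp; apply/eqP; rewrite eq_complex /= addr0 !eqxx. Qed.

Lemma expiMn (x : R) (k : nat) : expi (x *+ k) = expi x ^+ k.
Proof.
elim: k => [|k IH]; first by rewrite mulr0n expr0 /expi cexp0.
by rewrite mulrS expiD IH exprS.
Qed.

Lemma expi_2pi_int (d : int) : expi (pi *+ 2 * d%:~R) = 1.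
Proof.
have e2pi : expi (pi *+ 2) = 1.
  by rewrite /expi /cexp /= expR0 !mul1r cos2pi sin2pi.
have e2piMn (k : nat) : expi (pi *+ 2 * k%:R) = 1 by rewrite mulr_natr expiMn e2pi expr1n.
case: d => k; first exact: e2piMn.
rewrite NegzE mulrNz mulrN /expi -[0]oppr0 (_ : - 0 +i* _ = - (0 +i* (pi *+ 2 * k.+1%:R))) //.
by rewrite cexpN -/(expi _) e2piMn invr1.
Qed.

Lemma cos_lt1 (x : R) : 0 < `|x| < pi *+ 2 -> cos x < 1.
Proof.
move=> /andP[x0 x2pi]; rewrite -cos_norm -[`|x|](divfK (_ : 2 != 0)) ?pnatr_eq0 //.
rewrite mulr_natr cos_mulr2n cos2sin2.
have : 0 < sin (`|x| / 2) ^+ 2.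
  by rewrite exprn_gt0 // sin_gt0_pi // divr_gt0 //= ltr_pdivrMr // mulr_natr.
lra.
Qed.

Lemma sum_expi_unity_roots (d : int) (M : nat) : (`|d| < M)%N ->
  \sum_(t < M) expi (d%:~R * (pi *+ 2 * t%:R / M%:R)) = if d == 0 then M%:R else 0.
Proof.
move=> dM; have M0 : (0 < M)%N by apply: leq_ltn_trans dM.
have M0R : (M%:R : R) != 0 by rewrite pnatr_eq0 -lt0n.
pose w := expi (d%:~R * (pi *+ 2) / M%:R).
have -> : \sum_(t < M) expi (d%:~R * (pi *+ 2 * t%:R / M%:R)) = \sum_(t < M) w ^+ t.
  by apply: eq_bigr => t _; rewrite -expiMn -mulr_natr; congr expi; field.
have [d0|d0] := eqVneq d 0.
  rewrite /w d0 !mul0r /expi cexp0.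
  by under eq_bigr do rewrite expr1n; rewrite sumr_const card_ord.
have wM : w ^+ M = 1.
  by rewrite -expiMn -[_ *+ M]mulr_natr divfK // mulrC expi_2pi_int.
have w1 : w != 1.
  have c1 : cos (d%:~R * (pi *+ 2) / M%:R : R) < 1.
    have pi0 : 0 < pi *+ 2 :> R by rewrite pmulrn_lgt0 // pi_gt0.
    apply: cos_lt1; rewrite !normrM normfV (gtr0_norm pi0) (ger0_norm (ler0n _ M)).
    rewrite -intr_norm -natr_absz !mulr_gt0 ?invr_gt0 ?ltr0n ?absz_gt0 //=.
    by rewrite ltr_pdivrMr ?ltr0n // mulrC ltr_pM2l // ltr_nat.
  apply: (contra_neq _ (negbT (lt_eqF c1))).
  by rewrite /w /expi /cexp /= expR0 !mul1r => -[].
have := subrX1 w M; rewrite wM subrr => /esym/eqP.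
by rewrite mulf_eq0 subr_eq0 (negbTE w1) => /eqP.
Qed.

End UnitCircle.

Section GridFourier.
Context {R : realType} {n : nat}.
Local Notation C := R[i].
Local Notation V := ('I_n -> C).
Local Notation Zn := {ffun 'I_n -> int}.
Local Open Scope complex_scope.
Local Notation cexp := (@cexp R).

Definition grid (M : nat) (tau : 'I_n -> R) (j : {ffun 'I_n -> 'I_M}) : V :=
  fun i => (pi *+ 2 * (j i)%:R / M%:R) +i* tau i.

Definition grid_coef (M : nat) (tau : 'I_n -> R) (F : V -> C) (mu : Zn) : C :=
  (M%:R ^+ n)^-1 * \sum_(j : {ffun 'I_n -> 'I_M})
    F (grid M tau j) * cexp (- ('i * idot mu (grid M tau j))).

Lemma cexp_iM_intr (d : int) (a b : R) :
  cexp ('i * (d%:~R * (a +i* b))) = (expR (- (d%:~R * b)))%:C * expi (d%:~R * a).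
Proof.
rewrite intr_complex /expi /cexp /= expR0 !mul0r !mul1r !subr0 !sub0r !addr0 !add0r.
by apply/eqP; rewrite eq_complex /= !mul0r !subr0 !addr0 !eqxx.
Qed.

Lemma cexp_idotB (nu mu : Zn) (phi : V) :
  cexp ('i * idot nu phi) * cexp (- ('i * idot mu phi)) =
  \prod_i cexp ('i * ((nu i - mu i)%:~R * phi i)).
Proof.
rewrite -cexpD -mulrBr /idot -sumrB mulr_sumr cexp_sum.
by apply: eq_bigr => i _; rewrite intrB mulrBl.
Qed.

Lemma sum_grid_cexp_idot (nu mu : Zn) (M : nat) (tau : 'I_n -> R) :
  (forall i, `|nu i - mu i| < M)%N ->
  \sum_(j : {ffun 'I_n -> 'I_M})
    cexp ('i * idot nu (grid M tau j)) * cexp (- ('i * idot mu (grid M tau j)))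
  = if nu == mu then M%:R ^+ n else 0.
Proof.
move=> numu; under eq_bigr do rewrite cexp_idotB.
under eq_bigr do under eq_bigr do rewrite /grid cexp_iM_intr.
rewrite -(bigA_distr_bigA (fun i (t : 'I_M) => (expR (- ((nu i - mu i)%:~R * tau i)))%:C *
  expi ((nu i - mu i)%:~R * (pi *+ 2 * t%:R / M%:R)))) /=.
under eq_bigr do rewrite -mulr_sumr sum_expi_unity_roots //.
have [->|numu'] := eqVneq nu mu.
  by under eq_bigr do rewrite subrr eqxx mul0r oppr0 expR0 mul1r; rewrite prodr_const card_ord.
have [i numui] : exists i, nu i != mu i.
  apply/existsP; apply: contraNT numu' => /existsPn numu''.
  by apply/eqP/ffunP => i; apply/eqP/negPn.
by rewrite (bigD1 i) //= subr_eq0 (negbTE numui) mulr0 mul0r.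
Qed.

Lemma grid_coefE (N : seq Zn) (c : Zn -> C) (M : nat) (tau : 'I_n -> R) (F : V -> C) (mu : Zn) :
  uniq N -> (0 < M)%N -> {in N &, forall nu nu' : Zn, forall i, `|nu i - nu' i| < M}%N ->
  (forall j, F (grid M tau j) = \sum_(nu <- N) c nu * cexp ('i * idot nu (grid M tau j))) ->
  mu \in N -> c mu = grid_coef M tau F mu.
Proof.
move=> uN M0 NM FN muN; rewrite /grid_coef.
under eq_bigr do rewrite FN mulr_suml.
rewrite exchange_big /= big_seq (eq_bigr (fun nu => c nu * (if nu == mu then M%:R ^+ n else 0))).
  rewrite -big_seq (bigD1_seq mu) //= eqxx big1 => [|nu /negbTE ->]; last by rewrite mulr0.
  by rewrite addr0 mulrC mulfK // expf_neq0 // pnatr_eq0 -lt0n.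
move=> nu nuN; rewrite -(@sum_grid_cexp_idot _ _ _ tau (NM _ _ nuN muN)) mulr_sumr.
by apply: eq_bigr => j _; rewrite mulrA.
Qed.

End GridFourier.

Section Estimates.
Context {R : realType} {n : nat}.
Local Notation C := R[i].
Local Notation V := ('I_n -> C).
Local Notation Zn := {ffun 'I_n -> int}.
Local Open Scope complex_scope.
Local Notation cabs := (@cabs R).

Lemma absz_le_setnorm (N : seq Zn) (nu : Zn) i : nu \in N -> (`|nu i| <= setnorm N)%N.
Proof.
move=> nuN; apply: (@leq_trans (inorm nu)); last exact: leq_bigmax_seq.
exact: (@leq_bigmax_cond _ predT (fun j => `|nu j|%N) i).
Qed.

Lemma absz_sub_lt_setnorm (N : seq Zn) : {in N &, forall nu nu' : Zn, forall i,
  `|nu i - nu' i| < (setnorm N).*2.+1}%N.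
Proof.
move=> nu nu' nuN nu'N i; rewrite ltnS -addnn.
apply: leq_trans (leqD_dist _ 0 _) _; rewrite subr0 sub0r abszN.
by rewrite leq_add ?absz_le_setnorm.
Qed.

Lemma Im_idot (mu : Zn) (phi : V) :
  complex.Im (idot mu phi) = \sum_i (mu i)%:~R * complex.Im (phi i).
Proof.
rewrite /idot Im_sum; apply: eq_bigr => i _; rewrite intr_complex.
by case: (phi i) => a b /=; rewrite mul0r addr0.
Qed.

Lemma cabs_idot_gt {N : seq Zn} {k : 'I_n} {L r : R} {mu : Zn} {I : V} :
  0 < L -> r * (2 * n%:R * (setnorm N)%:R) < 1 -> mu \in N -> mu k != 0 ->
  (forall i, cabs (I i - (if i == k then L%:C else 0)) < r * L) ->
  L / 2 < cabs (idot mu I).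
Proof.
move=> L0 hr muN muk hI; set K : R := (setnorm N)%:R.
pose e := \sum_i (mu i)%:~R * (I i - (if i == k then L%:C else 0)).
have idotE : idot mu I = e + (mu k)%:~R * L%:C.
  have -> : (mu k)%:~R * L%:C = \sum_i (mu i)%:~R * (if i == k then L%:C else 0).
    by rewrite (bigD1 k) //= eqxx big1 ?addr0 // => i /negbTE ->; rewrite mulr0.
  by rewrite /idot /e -big_split; apply: eq_bigr => i _ /=; rewrite -mulrDr subrK.
have he : cabs e <= n%:R * (K * (r * L)).
  apply: le_trans (ler_cabs_sum _ _ _ _) _.
  rewrite -[n in n%:R]card_ord mulr_natl -sumr_const ler_sum // => i _.
  rewrite cabsM cabs_intr ler_pM ?normr_ge0 ?cabs_ge0 ?(ltW (hI i)) //.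
  by rewrite -intr_norm -natr_absz ler_nat absz_le_setnorm.
have hmk : L <= cabs ((mu k)%:~R * L%:C).
  rewrite cabsM cabs_intr cabsC (gtr0_norm L0) ler_peMl ?(ltW L0) //.
  by rewrite norm_intr_ge1 ?intr_int // intr_eq0.
have : cabs ((mu k)%:~R * L%:C) <= cabs (idot mu I) + cabs e.
  by rewrite idotE -{1}(addKr e ((mu k)%:~R * L%:C)) [- e + _]addrC ler_cabsB.
have : n%:R * (K * (r * L)) < L / 2.
  by rewrite (_ : _ * _ = r * (2 * n%:R * K) * L / 2) ?ltr_pM2r ?gtr_pMl //; field.
lra.
Qed.

Lemma geometric_sum_le (x : R) (K : nat) : 0 <= x < 1 ->
  \sum_(m < K) x ^+ m <= (1 - x)^-1.
Proof.
case/andP=> x0 x1; have x1' : 0 < 1 - x by rewrite subr_gt0.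
rewrite -(ler_pM2l x1') mulfV ?gt_eqF // -opprB mulNr -subrX1 opprB.
by rewrite lerBlDr lerDl exprn_ge0.
Qed.

Lemma sum_uniq_le_sum (T : finType) (s : seq T) (G : T -> R) : uniq s ->
  (forall c, 0 <= G c) -> \sum_(c <- s) G c <= \sum_c G c.
Proof.
move=> us G0; rewrite big_uniq // [X in _ <= X](bigID (mem s)) /= lerDl.
by apply: sumr_ge0 => c _.
Qed.

Lemma sum_prod_exprn_le (N : seq Zn) (x : R) : 0 <= x -> uniq N ->
  \sum_(mu <- N) \prod_i x ^+ `|mu i|%N <= (2 * \sum_(m < (setnorm N).+1) x ^+ m) ^+ n.
Proof.
move=> x0 uN; set K := setnorm N.
(* [mu] is determined by the signs and the absolute values of its entries. *)
pose code (mu : Zn) : {ffun 'I_n -> bool * 'I_K.+1} :=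
  [ffun i => ((mu i < 0)%R, inord `|mu i|%N)].
pose G (c : {ffun 'I_n -> bool * 'I_K.+1}) := \prod_i x ^+ (c i).2.
have codeK i mu : mu \in N -> (code mu i).2 = `|mu i|%N :> nat.
  by move=> muN; rewrite ffunE inordK // ltnS absz_le_setnorm.
rewrite big_seq (eq_bigr (G \o code)) => [|mu muN]; last first.
  by apply: eq_bigr => i _; rewrite codeK.
rewrite -big_seq -(big_map code xpredT G).
apply: le_trans (sum_uniq_le_sum _ _ _ _ _) _.
- rewrite map_inj_in_uniq // => mu1 mu2 h1 h2 /ffunP e12; apply/ffunP => i.
  have := e12 i; rewrite !ffunE => -[s12 /(congr1 (@nat_of_ord _))].
  rewrite !inordK ?ltnS ?absz_le_setnorm //.
  by move=> a12; rewrite [mu1 i]intEsign [mu2 i]intEsign s12 a12.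
- by move=> c; apply: prodr_ge0 => i _; apply: exprn_ge0.
rewrite /G -(bigA_distr_bigA (fun i (p : bool * 'I_K.+1) => x ^+ p.2)) /=.
have sum_ge0 (I : finType) (e : I -> nat) : 0 <= \sum_(p : I) x ^+ e p.
  by apply: sumr_ge0 => p _; apply: exprn_ge0.
rewrite prodr_const card_ord lerXn2r ?nnegrE ?mulr_ge0 //.
rewrite -(pair_big xpredT xpredT (fun (b : bool) (m : 'I_K.+1) => x ^+ m)) /=.
by rewrite big_bool /= mulr2n mulrDl mul1r.
Qed.

Lemma inv_1subexpRN_le (d : R) : 0 < d < 1 -> (1 - expR (- (d / (2 - d))))^-1 <= 2 / d.
Proof.
case/andP=> d0 d1; set y := d / (2 - d).
have d2 : 2 - d != 0 by rewrite subr_eq0 gt_eqF // (lt_trans d1) // ltr1n.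
have y0 : 0 < y by rewrite divr_gt0 // lt_def d2 subr_ge0 ltW // (lt_trans d1) // ltr1n.
have yE : 1 - (1 + y)^-1 = d / 2.
  by rewrite /y; field; rewrite d2 /= subrK pnatr_eq0.
have : expR (- y) <= (1 + y)^-1.
  by rewrite expRN lef_pV2 ?posrE ?expR_gt0 ?expR_ge1Dx // addr_gt0.
move=> hy; have h : d / 2 <= 1 - expR (- y) by lra.
have d20 : 0 < d / 2 by rewrite divr_gt0.
by rewrite -invf_div lef_pV2 ?posrE // (lt_le_trans d20).
Qed.

End Estimates.

Section CauchyEstimate.
Context {R : realType} {n : nat}.
Local Notation C := R[i].
Local Notation V := ('I_n -> C).
Local Notation Zn := {ffun 'I_n -> int}.
Local Open Scope complex_scope.
Local Notation cabs := (@cabs R).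

Lemma cabs_natrX (m : nat) : cabs ((m%:R : C) ^+ n) = m%:R ^+ n.
Proof. by rewrite -(rmorph_nat (real_complex R)) -rmorphXn cabsC ger0_norm. Qed.

Lemma cabs_coef_le (N : seq Zn) (c : Zn -> C) (F : V -> C) (S sigma s : R) (mu : Zn) :
  uniq N -> 0 <= s < sigma ->
  (forall phi, (forall i, `|complex.Im (phi i)| < sigma) ->
     F phi = \sum_(nu <- N) c nu * cexp ('i * idot nu phi)) ->
  (forall phi, (forall i, `|complex.Im (phi i)| < sigma) -> cabs (F phi) <= S) ->
  mu \in N -> cabs (c mu) <= S * expR (- (s * \sum_i `|mu i|%:R)).
Proof.
move=> uN /andP[s0 ss] FN FS muN; set M := (setnorm N).*2.+1.
pose tau i := if (0 <= mu i)%R then - s else s.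
have strip j i : `|complex.Im (grid M tau j i)| < sigma.
  by rewrite /tau /=; case: ifP; rewrite ?normrN ger0_norm.
have ImE j : complex.Im (idot mu (grid M tau j)) = - (s * \sum_i `|mu i|%:R).
  rewrite Im_idot mulr_sumr -sumrN; apply: eq_bigr => i _ /=; rewrite /tau natr_absz intr_norm.
  case: ifP => mu0; first by rewrite ger0_norm ?ler0z // mulrN mulrC.
  by rewrite ltr0_norm ?mulrN ?opprK 1?mulrC // ltrz0 ltNge mu0.
rewrite (@grid_coefE _ _ N c M tau F mu uN _ (absz_sub_lt_setnorm N)) //; last first.
  by move=> j; apply: FN.
have term j : cabs (F (grid M tau j) * cexp (- ('i * idot mu (grid M tau j)))) <=
    S * expR (- (s * \sum_i `|mu i|%:R)).
  by rewrite cabsM cabs_cexp_Ni ImE ler_wpM2r ?expR_ge0 ?FS.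
rewrite /grid_coef cabsM cabsV cabs_natrX.
apply: le_trans (ler_wpM2l _ (le_trans (ler_cabs_sum _ _ _ _) (ler_sum _ (fun j _ => term j)))) _.
  by rewrite invr_ge0 exprn_ge0.
rewrite sumr_const card_ffun !card_ord -[_ *+ (M ^ n)]mulr_natl natrX mulrA mulVf ?mul1r //.
by rewrite expf_neq0 // pnatr_eq0.
Qed.

End CauchyEstimate.

Lemma holomorphic_at_grid_coef {R : realType} {n : nat} (M : nat) (tau : 'I_n -> R)
    (F : ('I_n -> R[i]) -> ('I_n -> R[i]) -> R[i]) (mu : {ffun 'I_n -> int})
    (I phi : 'I_n -> R[i]) :
  (forall j, holomorphic_at F I (grid M tau j)) ->
  holomorphic_at (fun J _ => grid_coef M tau (F J) mu) I phi.
Proof.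
move=> hF; apply: holomorphic_atM; first exact: holomorphic_at_cst.
apply: holomorphic_at_sum => j _; apply: holomorphic_atM; last exact: holomorphic_at_cst.
exact: holomorphic_at_fix2.
Qed.

Section QOperator.
Variables (R : realType) (n : nat) (k : 'I_n) (L r sigma : R).
Variables (N : seq {ffun 'I_n -> int}) (fmu : {ffun 'I_n -> int} -> ('I_n -> R[i]) -> R[i]).
Variable f : ('I_n -> R[i]) -> ('I_n -> R[i]) -> R[i].
Local Notation C := R[i].
Local Notation V := ('I_n -> C).
Local Notation M := (setnorm N).*2.+1.
Local Open Scope complex_scope.
Local Notation cabs := (@cabs R).

Hypotheses (L0 : 0 < L) (sigma0 : 0 < sigma) (uN : uniq N).
Hypothesis hr : r * (2 * n%:R * (setnorm N)%:R) < 1.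
Hypothesis frep : forall I phi, domD k L r sigma I phi ->
  f I phi = \sum_(mu <- N) fmu mu I * cexp ('i * idot mu phi).

Definition action_ball (I : V) := forall i, cabs (I i - (if i == k then L%:C else 0)) < r * L.

Lemma domD_action_ball (s : R) (I phi : V) : domD k L r s I phi -> action_ball I.
Proof. by move=> D i; case: (D i). Qed.

Lemma action_ball_shift {I : V} : action_ball I ->
  exists2 rho, 0 < rho & forall h, vnorm h < rho -> action_ball (fun i => I i + h i).
Proof.
move=> hI; set v := fun i => I i - (if i == k then L%:C else 0).
have hv : vnorm v < r * L by apply: vnorm_lt => //; apply: le_lt_trans (cabs_ge0 _) (hI k).
exists (r * L - vnorm v) => [|h hh i]; first by rewrite subr_gt0.
rewrite (_ : _ - _ = v i + h i); last by rewrite /v; ring.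
apply: le_lt_trans (ler_cabsD _ _) _.
by have := ler_cabs_vnorm v i; have := ler_cabs_vnorm h i; lra.
Qed.

Lemma fmu_grid_coef (tau : 'I_n -> R) {I : V} {mu : {ffun 'I_n -> int}} :
  action_ball I -> (forall i, `|tau i| < sigma) -> mu \in N ->
  fmu mu I = grid_coef M tau (f I) mu.
Proof.
move=> hI htau.
apply: (@grid_coefE _ _ N (fmu^~ I) M tau (f I) mu uN _ (absz_sub_lt_setnorm N)) => // j.
by apply: frep => i; split; [exact: hI | exact: htau].
Qed.

Definition Qgrid (I phi : V) : C :=
  - 'i * \sum_(mu <- N | (mu \in N) && (mu k != 0))
    (grid_coef M (fun=> 0) (f I) mu / idot mu I * cexp ('i * idot mu phi)).

Lemma Qop_grid (I phi : V) : action_ball I -> Qop k N fmu I phi = Qgrid I phi.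
Proof.
move=> hI; rewrite /Qop /Qgrid big_seq_cond; congr (_ * _).
apply: eq_bigr => mu /andP[muN _].
by rewrite (fmu_grid_coef (fun=> 0) hI _ muN) // => i; rewrite normr0.
Qed.

Lemma holomorphic_at_Qgrid (I phi : V) : analytic_on f (domD k L r sigma) ->
  action_ball I -> holomorphic_at Qgrid I phi.
Proof.
move=> fan hI; apply: holomorphic_atM; first exact: holomorphic_at_cst.
apply: holomorphic_at_sum => mu /andP[muN muk].
have idot0 : idot mu I != 0.
  by rewrite -cabs_gt0 (lt_trans _ (cabs_idot_gt L0 hr muN muk hI)) // divr_gt0.
apply: holomorphic_atM; last first.
  apply: (holomorphic_at_comp (fun _ psi => 'i * idot mu psi) (has_cderiv_cexp _)).
  apply: (eq_holomorphic_at (holomorphic_at_dot (fun=> 0) (fun i => 'i * (mu i)%:~R) I phi)).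
  move=> J psi; rewrite big1 ?add0r => [|i _]; last by rewrite mul0r.
  by rewrite /idot mulr_sumr; apply: eq_bigr => i _; rewrite mulrA.
apply: holomorphic_atM.
  apply: holomorphic_at_grid_coef => j; apply: fan => i; split; first exact: hI.
  by rewrite normr0.
apply: (holomorphic_at_comp (fun J _ => idot mu J) (has_cderiv_inv idot0)).
apply: (eq_holomorphic_at (holomorphic_at_dot (fun i => (mu i)%:~R) (fun=> 0) I phi)).
by move=> J psi; rewrite [X in _ + X]big1 ?addr0 // => i _; rewrite mul0r.
Qed.

Lemma Qop_analytic (sigma' : R) : analytic_on f (domD k L r sigma) ->
  analytic_on (Qop k N fmu) (domD k L r sigma').
Proof.
move=> fan I phi /domD_action_ball hI.
have [rho rho0 shift] := action_ball_shift hI.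
apply: (holomorphic_at_local rho0 _ (Qop_grid _ _ hI)); last exact: holomorphic_at_Qgrid.
by move=> h g hh _; apply: Qop_grid; apply: shift.
Qed.

Lemma cabs_Qterm_le (sigma' y S : R) (I phi : V) (mu : {ffun 'I_n -> int}) :
  action_ball I -> (forall i, `|complex.Im (phi i)| < sigma') -> mu \in N -> mu k != 0 ->
  cabs (fmu mu I) <= S * expR (- ((sigma' + y) * \sum_i `|mu i|%:R)) ->
  cabs (fmu mu I / idot mu I * cexp ('i * idot mu phi)) <=
    2 * S / L * \prod_i expR (- y) ^+ `|mu i|.
Proof.
move=> hI hphi muN muk hc; set A : R := \sum_i `|mu i|%:R.
have L2 : L / 2 < cabs (idot mu I) := cabs_idot_gt L0 hr muN muk hI.
have iv : (cabs (idot mu I))^-1 <= 2 / L.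
  by rewrite -invf_div lef_pV2 ?posrE ?divr_gt0 ?(ltW L2) // (lt_trans _ L2) // divr_gt0.
have ce : cabs (cexp ('i * idot mu phi)) <= expR (sigma' * A).
  rewrite cabs_cexp_i Im_idot ler_expR /A mulr_sumr -sumrN ler_sum // => i _.
  rewrite natr_absz intr_norm -mulrN (le_trans (ler_norm _)) // normrM normrN mulrC.
  by rewrite ler_wpM2r // ltW.
have eprod : expR (- ((sigma' + y) * A)) * expR (sigma' * A) = \prod_i expR (- y) ^+ `|mu i|.
  rewrite -expRD (_ : _ + _ = A * - y); last by ring.
  by rewrite mulr_suml expR_sum; apply: eq_bigr => i _; rewrite expRM_natl.
rewrite -eprod !cabsM cabsV.
have b0 : 0 <= (cabs (idot mu I))^-1 by rewrite invr_ge0 cabs_ge0.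
have := ler_pM (mulr_ge0 (cabs_ge0 _) b0) (cabs_ge0 _) (ler_pM (cabs_ge0 _) b0 hc iv) ce.
move/le_trans; apply.
by rewrite le_eqVlt; apply/orP; left; apply/eqP; ring.
Qed.

Lemma cabs_Qop_le (sigma' S : R) (I phi : V) : sigma <= 1 -> 0 < sigma' < sigma ->
  action_ball I -> (forall i, `|complex.Im (phi i)| < sigma') ->
  (forall J psi, domD k L r sigma J psi -> cabs (f J psi) <= S) ->
  cabs (Qop k N fmu I phi) <= 2 * (4 / (sigma - sigma')) ^+ n / L * S.
Proof.
move=> sigma1 /andP[s'0 ss'] hI hphi fS; set d := sigma - sigma'.
have d01 : 0 < d < 1 by apply/andP; split; rewrite /d; lra.
set y := d / (2 - d); set x := expR (- y).
have y0 : 0 < y by rewrite divr_gt0 //; lra.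
have yd : y < d by rewrite /y ltr_pdivrMr; nra.
have x01 : 0 <= x < 1 by rewrite expR_ge0 expR_lt1 oppr_lt0.
have inD J psi : action_ball J -> (forall i, `|complex.Im (psi i)| < sigma) ->
    domD k L r sigma J psi.
  by move=> hJ hpsi i; split; [exact: hJ | exact: hpsi].
have S0 : 0 <= S.
  by apply: le_trans (cabs_ge0 _) (fS I (fun=> 0) (inD _ _ hI _)) => i; rewrite normr0.
have SL : 0 <= 2 * S / L by rewrite divr_ge0 ?mulr_ge0 // ltW.
have term mu : mu \in N -> mu k != 0 ->
    cabs (fmu mu I / idot mu I * cexp ('i * idot mu phi)) <= 2 * S / L * \prod_i x ^+ `|mu i|.
  move=> muN muk; apply: cabs_Qterm_le => //.
  apply: (@cabs_coef_le _ _ N (fmu^~ I) (f I) _ sigma) => //.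
  - by rewrite addr_ge0 ?ltW //=; move: yd; rewrite /d; lra.
  - by move=> psi hpsi; apply/frep/inD.
  - by move=> psi hpsi; apply/fS/inD.
rewrite /Qop cabsM cabsN cabs_i mul1r; apply: le_trans (ler_cabs_sum _ _ _ _) _.
apply: le_trans (_ : _ <= \sum_(mu <- N) 2 * S / L * \prod_i x ^+ `|mu i|) _.
  rewrite [X in _ <= X](bigID (fun mu : {ffun _ -> int} => mu k != 0)) /=.
  rewrite -[X in X <= _]addr0 lerD //.
    rewrite big_seq_cond [X in _ <= X]big_seq_cond ler_sum // => mu /andP[muN muk].
    exact: term.
  by apply: sumr_ge0 => mu _; rewrite mulr_ge0 // prodr_ge0 // => i _; rewrite exprn_ge0 ?expR_ge0.
rewrite -mulr_sumr (le_trans (ler_wpM2l SL (sum_prod_exprn_le N x (expR_ge0 _) uN))) //.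
have geom : 2 * \sum_(m < (setnorm N).+1) x ^+ m <= 4 / d.
  rewrite (le_trans (ler_wpM2l _ (geometric_sum_le _ _ x01))) //.
  rewrite (_ : 4 / d = 2 * (2 / d)) ?ler_wpM2l ?inv_1subexpRN_le //.
  by field; rewrite gt_eqF //; lra.
rewrite (_ : 2 * _ ^+ n / L * S = 2 * S / L * (4 / d) ^+ n); last by ring.
rewrite ler_wpM2l // lerXn2r ?nnegrE ?divr_ge0 //; last by case/andP: d01 => /ltW.
by rewrite mulr_ge0 // sumr_ge0 // => m _; rewrite exprn_ge0 ?expR_ge0.
Qed.

End QOperator.

Arguments Qop_analytic {R n k L r sigma N fmu f}.
Arguments cabs_Qop_le {R n k L r sigma N fmu f}.
Arguments domD_action_ball {R n k L r s I phi}.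

Lemma supnorm_le_mul {R : realType} {n : nat} (k : 'I_n) (L r s s' c : R)
    (F G : ('I_n -> R[i]) -> ('I_n -> R[i]) -> R[i]) : 0 < c -> 0 < s ->
  (forall I phi S, domD k L r s' I phi ->
     (forall J psi, domD k L r s J psi -> cabs (G J psi) <= S) -> cabs (F I phi) <= c * S) ->
  (supnorm k L r s' F <= c%:E * supnorm k L r s G)%E.
Proof.
move=> c0 s0 FG; apply: ge_ereal_sup => _ [I [phi [D ->]]].
have ub J psi : domD k L r s J psi -> ((cabs (G J psi))%:E <= supnorm k L r s G)%E.
  by move=> DJ; apply: ereal_sup_ubound; exists J, psi.
have D0 : domD k L r s I (fun=> 0) by move=> i; split; [case: (D i) | rewrite normr0].
move: ub; case: (supnorm k L r s G) => [S | | ] ub.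
- by rewrite -EFinM lee_fin; apply: FG => // J psi /ub; rewrite lee_fin.
- by rewrite gt0_muley ?lte_fin // leey.
- by have := ub _ _ D0; rewrite leeNy_eq.
Qed.

Theorem propositionA3 (R : realType) (n : nat) (k : 'I_n) (L sigma r : R)
    (N : seq {ffun 'I_n -> int})
    (fmu : {ffun 'I_n -> int} -> ('I_n -> R[i]) -> R[i])
    (f : ('I_n -> R[i]) -> ('I_n -> R[i]) -> R[i]) :
  (2 <= n)%N ->
  0 < L -> 0 < sigma -> sigma <= 1 -> 0 < r ->
  uniq N ->
  (forall I phi, domD k L r sigma I phi ->
     f I phi = \sum_(mu <- N) fmu mu I * cexp ('i%C * idot mu phi)) ->
  analytic_on f (domD k L r sigma) ->
  r * (2 * n%:R * (setnorm N)%:R) < 1 ->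
  forall sigma' : R, 0 < sigma' -> sigma' < sigma ->
    analytic_on (Qop k N fmu) (domD k L r sigma') /\
    (supnorm k L r sigma' (Qop k N fmu)
      <= (2 * (4 / (sigma - sigma')) ^+ n / L)%:E * supnorm k L r sigma f)%E.
Proof.
move=> _ L0 sigma0 sigma1 _ uN frep fan hr sigma' sigma'0 ss'.
split; first exact: (Qop_analytic L0 sigma0 uN hr frep).
apply: supnorm_le_mul => // [|I phi S D fS].
  by rewrite !mulr_gt0 ?invr_gt0 ?exprn_gt0 ?divr_gt0 ?subr_gt0.
apply: (cabs_Qop_le L0 sigma0 uN hr frep) => //; first by rewrite sigma'0.
  exact: domD_action_ball D.
by move=> i; case: (D i).
Qed.
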